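(* Let $H=\sum_{i=1}^Nc_iP_i$ be a Pauli Hamiltonian, $|\psi\rangle$ a state, $\mathcal{R}=(G^{[1]},\dots,G^{[m]})$ a repacked grouping (of some grouping of $H$), and $\mathcal{R}'=(G'^{[1]},\dots,G'^{[m]})$ a refinement of $\mathcal{R}$ such that for some $1\le\ell\le m$: $G'^{[j]}=G^{[j]}$ for all $j\ne\ell$, and $G'^{[\ell]}\setminus G^{[\ell]}=\{P_s\}$ for some $P_s\in\mathrm{supp}(H)$. Fix positive integer shot counts $M_1,\dots,M_m$ used for both $\mathcal{R}$ and $\mathcal{R}'$. Define, for $t,t'\in\{1,\dots,N\}$, $\alpha_t=\sum_{j\in\Gamma_{\mathcal{R}}(t)}M_j$ and $\alpha_{t,t'}=\sum_{j\in\Gamma_{\mathcal{R}}(t)\cap\Gamma_{\mathcal{R}}(t')}M_j$, and $\mathcal{Q}_\ell=\{i:P_i\in G^{[\ell]}\}$, $\mathcal{Q}_\ell^\complement=\{1,\dots,N\}\setminus\mathcal{Q}_\ell$. Then, for the shot-weighted averaging estimators, $\mathrm{Var}(\overline{E}_{\mathcal{R}'})\le\mathrm{Var}(\overline{E}_{\mathcal{R}})$ if and only if $$\tfrac12c_s^2\sigma^2_{P_s}\ \ge\ \sum_{i\in\mathcal{Q}_\ell}c_ic_s\sigma_{P_iP_s}\frac{\alpha_s-\alpha_{i,s}}{\alpha_i}\ -\sum_{i\in\mathcal{Q}_\ell^\complement,\,i\ne s}c_ic_s\sigma_{P_iP_s}\frac{\alpha_{i,s}}{\alpha_i},$$ and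 $\mathrm{Var}(\overline{E}_{\mathcal{R}'})<\mathrm{Var}(\overline{E}_{\mathcal{R}})$ if and only if this inequality is strict.
   Context: A Pauli Hamiltonian is $H=\sum_{i=1}^Nc_iP_i$ with real nonzero $c_i$ and distinct $n$-qubit Pauli strings; $\mathrm{supp}(H)=\{P_1,\dots,P_N\}$. $\sigma_P^2=1-\langle P\rangle^2$, and for commuting $P,Q$, $\sigma_{PQ}=\langle PQ\rangle-\langle P\rangle\langle Q\rangle$ (terms with $\alpha_{i,s}=0$, possibly involving non-commuting pairs, are taken to be $0$). A repacked grouping is a list of $m$ sets of mutually commuting operators of $\mathrm{supp}(H)$ covering $\mathrm{supp}(H)$, possibly overlapping, each containing the corresponding group of an underlying disjoint grouping; $(G'^{[j]})$ is a refinement of $(G^{[j]})$ if $G^{[j]}\subseteq G'^{[j]}$ for all $j$ (and it is again such a list). $\Gamma_{\mathcal{S}}(i)=\{j:P_i\in\text{group }j\text{ of }\mathcal{S}\}$. Measurement model: group $j$ is measured in $M_j$ independent shots with simultaneous $\pm1$ outcomes of all its operators; different groups are independent. The shot-weighted estimator is $\overline{E}_{\mathcal{S}}=\sum_ic_i\sum_{j\in\Gamma_{\mathcal{S}}(i)}\frac{M_j}{\sum_{k\in\Gamma_{\mathcal{S}}(i)}M_k}\overline{\langle P_i\rangle}_{(j)}$, whose variance is $\sum_i\frac{c_i^2\sigma_{P_i}^2}{\sum_{j\in\Gamma_{\mathcal{S}}(i)}M_j}+2\sum_{i<k}\frac{c_ic_k\sigma_{P_iP_k}\sum_{j\in\Gamma_{\mathcal{S}}(i)\cap\Gamma_{\mathcal{S}}(k)}M_j}{(\sum_{j\in\Gamma_{\mathcal{S}}(i)}M_j)(\sum_{j\in\Gamma_{\mathcal{S}}(k)}M_j)}$.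 *)

From HB Require Import structures.
From mathcomp Require Import all_boot all_order all_algebra.
From mathcomp Require Import complex.
Set Implicit Arguments. Unset Strict Implicit. Unset Printing Implicit Defensive.
Import Order.TTheory GRing.Theory Num.Theory.
Local Open Scope ring_scope.

(** Computational basis of n qubits. *)
Definition basis (n : nat) := {ffun 'I_n -> bool}.

(** An n-qubit Pauli string: each letter in 'I_4 with 0 = I, 1 = X, 2 = Y, 3 = Z. *)
Definition pstring (n : nat) := {ffun 'I_n -> 'I_4}.

Section Pauli.
Variable R : rcfType.
Local Notation C := R[i].

(** Entry (row b1, column b2) of the single-qubit Pauli matrix with letter a,
    basis order |0> = false, |1> = true. *)
Definition pentry (a : 'I_4) (b1 b2 : bool) : C :=
  match val a with
  | 0 => if b1 == b2 then 1 else 0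
  | 1 => if b1 == b2 then 0 else 1
  | 2 => if b1 == b2 then 0 else (if b1 then 'i%C else - 'i%C)
  | _ => if b1 == b2 then (if b1 then -1 else 1) else 0
  end.

(** Operators on (C^2)^{\otimes n}, as kernels (row, column) -> entry. *)
Definition op (n : nat) := basis n -> basis n -> C.

Definition pmat (n : nat) (P : pstring n) : op n :=
  fun x y => \prod_(k < n) pentry (P k) (x k) (y k).

Definition opmul (n : nat) (A B : op n) : op n :=
  fun x y => \sum_(z : basis n) A x z * B z y.

Definition pcommute (n : nat) (P Q : pstring n) : Prop :=
  forall x y, opmul (pmat P) (pmat Q) x y = opmul (pmat Q) (pmat P) x y.

Definition is_state (n : nat) (psi : basis n -> C) : Prop :=
  \sum_(x : basis n) (complex.Re (psi x) ^+ 2 + complex.Im (psi x) ^+ 2) = 1.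

(** Expectation value <psi|A|psi> (real part; real for Hermitian A). *)
Definition expv (n : nat) (psi : basis n -> C) (A : op n) : R :=
  @complex.Re R (\sum_(x : basis n) \sum_(y : basis n) (conjc (psi x)) * A x y * psi y).

Definition sigma2 (n : nat) (psi : basis n -> C) (P : pstring n) : R :=
  1 - expv psi (pmat P) ^+ 2.

Definition sigma (n : nat) (psi : basis n -> C) (P Q : pstring n) : R :=
  expv psi (opmul (pmat P) (pmat Q)) - expv psi (pmat P) * expv psi (pmat Q).

End Pauli.

(** * Groupings (groups are sets of term indices i, standing for P_i) *)

Definition commuting_set (R : rcfType) (n N : nat) (P : 'I_N -> pstring n)
    (A : {set 'I_N}) : Prop :=
  forall i k, i \in A -> k \in A -> pcommute R (P i) (P k).

Definition is_grouping (R : rcfType) (n N m : nat) (P : 'I_N -> pstring n)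
    (D : 'I_m -> {set 'I_N}) : Prop :=
  [/\ forall j, D j != set0,
      forall j j', j != j' -> [disjoint D j & D j'],
      forall i, exists j, i \in D j
    & forall j, commuting_set R P (D j)].

Definition is_repacked (R : rcfType) (n N m : nat) (P : 'I_N -> pstring n)
    (G : 'I_m -> {set 'I_N}) : Prop :=
  exists D : 'I_m -> {set 'I_N},
    [/\ is_grouping R P D,
        forall j, D j \subset G j
      & forall j, commuting_set R P (G j)].

Definition refines (N m : nat) (G G' : 'I_m -> {set 'I_N}) : Prop :=
  forall j, G j \subset G' j.

Definition Gam (N m : nat) (G : 'I_m -> {set 'I_N}) (i : 'I_N) : {set 'I_m} :=
  [set j | i \in G j].

Section Var.
Variable R : rcfType.

Definition alpha (N m : nat) (G : 'I_m -> {set 'I_N}) (M : 'I_m -> nat)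
    (t : 'I_N) : R :=
  \sum_(j in Gam G t) (M j)%:R.

Definition alpha2 (N m : nat) (G : 'I_m -> {set 'I_N}) (M : 'I_m -> nat)
    (t t' : 'I_N) : R :=
  \sum_(j in Gam G t :&: Gam G t') (M j)%:R.

(** Variance of the shot-weighted estimator, as given in the paper.
    (Covariance terms are multiplied by alpha_{i,k}, so they vanish whenever
    alpha_{i,k} = 0, in particular for non-commuting pairs.) *)
Definition Var_est (n N m : nat) (c : 'I_N -> R) (P : 'I_N -> pstring n)
    (psi : basis n -> R[i]) (G : 'I_m -> {set 'I_N}) (M : 'I_m -> nat) : R :=
  \sum_(i < N) c i ^+ 2 * sigma2 psi (P i) / alpha G M i
  + 2 * \sum_(i < N) \sum_(k < N | (i < k)%N)
          c i * c k * sigma psi (P i) (P k) * alpha2 G M i k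
          / (alpha G M i * alpha G M k).

End Var.

From HB Require Import structures.
From mathcomp Require Import all_boot all_order all_algebra.
From mathcomp Require Import complex.
From mathcomp Require Import ring.
Set Implicit Arguments. Unset Strict Implicit. Unset Printing Implicit Defensive.
Import Order.TTheory GRing.Theory Num.Theory.
Local Open Scope ring_scope.

(* Adding P_s to group l changes only two kinds of weights: alpha_s grows by
   M_l, and alpha_{i,s} grows by M_l exactly when P_i lies in group l.  Hence
   the two variances differ only in the variance term of P_s and in the
   covariance terms pairing P_s with another P_i, and a direct computation gives
     Var(R') - Var(R) = 2 M_l / (alpha_s (M_l + alpha_s)) (rhs - c_s^2 sigma_s^2 / 2),
   whose prefactor is positive. *)

Lemma big_ltn_pairs_through (V : nmodType) N (s : 'I_N) (f : 'I_N -> 'I_N -> V) :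
    (forall i k, i != s -> k != s -> f i k = 0) -> (forall i, f i s = f s i) ->
  \sum_(i < N) \sum_(k < N | (i < k)%N) f i k = \sum_(i < N | i != s) f i s.
Proof.
move=> f0 fC; rewrite (bigD1 s) //=.
have row_at_s i : i != s ->
    \sum_(k < N | (i < k)%N) f i k = if (i < s)%N then f i s else 0.
  move=> iNs; case: ltnP => [lt_is|le_si].
    by rewrite (bigD1 s) //= big1 ?addr0 // => k /andP[_]; apply: f0.
  apply: big1 => k lt_ik; apply: f0 => //; apply: contraTneq lt_ik => ->.
  by rewrite -leqNgt.
rewrite (eq_bigr _ row_at_s) -big_mkcondr /=.
rewrite [RHS](bigID (fun i : 'I_N => (i < s)%N)) /= addrC; congr (_ + _).
apply: eq_big => [k|k _]; last by rewrite fC.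
case: ltngtP => cmp; rewrite ?andbT ?andbF //= -(inj_eq val_inj) /=.
- by rewrite neq_ltn cmp orbT.
- by rewrite cmp eqxx.
Qed.

Lemma subr_pmul_le_lt_iff (R : numDomainType) (u v x y k : R) :
    0 < k -> u - v = k * (x - y) -> (u <= v <-> x <= y) /\ (u < v <-> x < y).
Proof.
move=> k_gt0 uv; rewrite -subr_le0 -subr_lt0 uv pmulr_rle0 // pmulr_rlt0 //.
by rewrite !subr_le0 !subr_lt0.
Qed.

Definition single_refinement N m (G G' : 'I_m -> {set 'I_N}) (l : 'I_m) (s : 'I_N) :=
  [/\ refines G G', forall j, j != l -> G' j = G j & G' l :\: G l = [set s]].

Section Refinement.
Variables (N m : nat) (G G' : 'I_m -> {set 'I_N}) (l : 'I_m) (s : 'I_N).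
Hypothesis addG : single_refinement G G' l s.

Lemma refine_new_notin : s \notin G l.
Proof.
by have [_ _ G'_new] := addG; have := set11 s; rewrite -G'_new inE => /andP[].
Qed.

Lemma Gam_refine t : t != s -> Gam G' t = Gam G t.
Proof.
move=> tNs; have [GG' G'_off G'_new] := addG; apply/setP => j; rewrite !inE.
have [->|jNl] := eqVneq j l; last by rewrite G'_off.
apply/idP/idP => [tG'|]; last exact: subsetP (GG' l) t.
apply: contraNT tNs => tNG; have : t \in G' l :\: G l by rewrite inE tNG.
by rewrite G'_new inE.
Qed.

Lemma Gam_refine_new : Gam G' s = l |: Gam G s.
Proof.
have [_ G'_off G'_new] := addG; apply/setP => j; rewrite !inE.
have [->|jNl] := eqVneq j l; last by rewrite G'_off.
by have := set11 s; rewrite -G'_new inE => /andP[_ ->].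
Qed.

Lemma Gam_refine_newI i : i != s ->
  Gam G' i :&: Gam G' s
  = if i \in G l then l |: (Gam G i :&: Gam G s) else Gam G i :&: Gam G s.
Proof.
move=> iNs; rewrite Gam_refine // Gam_refine_new; apply/setP => j.
by case: ifP => iGl; rewrite !inE; have [->|] := eqVneq j l; rewrite ?iGl.
Qed.

Variables (R : rcfType) (M : 'I_m -> nat).

Lemma alpha_refine t : t != s -> alpha R G' M t = alpha R G M t.
Proof. by move=> tNs; rewrite /alpha Gam_refine. Qed.

Lemma alpha_refine_new : alpha R G' M s = (M l)%:R + alpha R G M s.
Proof.
by rewrite /alpha Gam_refine_new big_setU1 // inE refine_new_notin.
Qed.

Lemma alpha2_refine i k : i != s -> k != s -> alpha2 R G' M i k = alpha2 R G M i k.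
Proof. by move=> iNs kNs; rewrite /alpha2 !Gam_refine. Qed.

Lemma alpha2_refine_new i : i != s ->
  alpha2 R G' M i s = alpha2 R G M i s + (i \in G l)%:R * (M l)%:R.
Proof.
move=> iNs; rewrite /alpha2 Gam_refine_newI //.
case: ifP => _; last by rewrite mul0r addr0.
rewrite mul1r addrC big_setU1 // !inE.
by rewrite (negbTE refine_new_notin) andbF.
Qed.

End Refinement.

Lemma repacked_cover (R : rcfType) n N m (P : 'I_N -> pstring n)
    (H : 'I_m -> {set 'I_N}) :
  is_repacked R P H -> forall t, exists j, t \in H j.
Proof.
move=> [D [[_ _ coverD _] DH _]] t; have [j tDj] := coverD t.
by exists j; apply: subsetP tDj.
Qed.

Lemma alpha_gt0 (R : rcfType) N m (H : 'I_m -> {set 'I_N}) (M : 'I_m -> nat) :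
    (forall t, exists j, t \in H j) -> (forall j, (0 < M j)%N) ->
  forall t, 0 < alpha R H M t.
Proof.
move=> coverH M_gt0 t; have [j tHj] := coverH t.
rewrite /alpha (bigD1 j) ?inE //=.
by rewrite ltr_pwDl ?ltr0n ?sumr_ge0.
Qed.

Lemma sigmaC (R : rcfType) n (psi : basis n -> R[i]) (P Q : pstring n) :
  pcommute R P Q -> sigma psi P Q = sigma psi Q P.
Proof.
move=> PQ; rewrite /sigma [_ * expv _ _]mulrC; congr (complex.Re _ - _).
by apply: eq_bigr => x _; apply: eq_bigr => y _; rewrite PQ.
Qed.

Section Estimator.
Variables (R : rcfType) (n N m : nat).
Variables (c : 'I_N -> R) (P : 'I_N -> pstring n) (psi : basis n -> R[i]).
Variable M : 'I_m -> nat.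

Definition cov_term (H : 'I_m -> {set 'I_N}) (i k : 'I_N) : R :=
  c i * c k * sigma psi (P i) (P k) * alpha2 R H M i k
  / (alpha R H M i * alpha R H M k).

Lemma Var_est_cov_term H :
  Var_est c P psi H M = \sum_(i < N) c i ^+ 2 * sigma2 psi (P i) / alpha R H M i
    + 2 * \sum_(i < N) \sum_(k < N | (i < k)%N) cov_term H i k.
Proof. by []. Qed.

(* Either no group contains both P_i and P_k, and then alpha2 vanishes, or some
   group does, and then P_i and P_k commute. *)
Lemma cov_termC H : (forall j, commuting_set R P (H j)) ->
  forall i k, cov_term H i k = cov_term H k i.
Proof.
move=> commH i k; rewrite /cov_term /alpha2 setIC.
have [->|[j]] := set_0Vmem (Gam H k :&: Gam H i).
  by rewrite big_set0 !mulr0 !mul0r.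
rewrite !inE => /andP[kHj iHj].
by rewrite (sigmaC psi (commH j i k iHj kHj)) [alpha R H M i * _]mulrC; ring.
Qed.

Definition refine_rhs (H : 'I_m -> {set 'I_N}) (l : 'I_m) (s : 'I_N) : R :=
  \sum_(i < N | i != s) c i * c s * sigma psi (P i) (P s)
    * ((i \in H l)%:R * alpha R H M s - alpha2 R H M i s) / alpha R H M i.

Lemma refine_rhsE (H : 'I_m -> {set 'I_N}) (l : 'I_m) (s : 'I_N) :
  s \notin H l ->
  refine_rhs H l s =
    \sum_(i in H l) c i * c s * sigma psi (P i) (P s)
      * (alpha R H M s - alpha2 R H M i s) / alpha R H M i
    - \sum_(i in ~: H l | i != s) c i * c s * sigma psi (P i) (P s)
      * alpha2 R H M i s / alpha R H M i.
Proof.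
move=> sNHl; rewrite /refine_rhs (bigID (mem (H l))) /= -sumrN; congr (_ + _).
  apply: eq_big => [i|i /andP[_ ->]]; last by rewrite mul1r.
  by apply/andb_idl => iHl; apply: contraTneq iHl => ->.
apply: eq_big => [i|i /andP[_ /negbTE ->]]; first by rewrite inE andbC.
by rewrite mul0r sub0r mulrN mulNr.
Qed.

Section RefineStep.
Variables (G G' : 'I_m -> {set 'I_N}) (l : 'I_m) (s : 'I_N).
Hypothesis addG : single_refinement G G' l s.
Hypothesis coverG : forall t, exists j, t \in G j.
Hypothesis M_gt0 : forall j, (0 < M j)%N.

Local Notation a := (alpha R G M).
Local Notation d := ((M l)%:R : R).

Let a_gt0 : forall t, 0 < a t := alpha_gt0 R coverG M_gt0.
Let d_gt0 : 0 < d. Proof. by rewrite ltr0n. Qed.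

Lemma cov_term_refine i k : i != s -> k != s -> cov_term G' i k = cov_term G i k.
Proof.
by move=> iNs kNs; rewrite /cov_term !(alpha_refine addG) //
  (alpha2_refine addG).
Qed.

Lemma cov_term_refine_new i : i != s ->
  cov_term G' i s - cov_term G i s
  = d / (a s * (d + a s))
    * (c i * c s * sigma psi (P i) (P s)
       * ((i \in G l)%:R * a s - alpha2 R G M i s) / a i).
Proof.
move=> iNs; rewrite /cov_term (alpha_refine addG) //.
rewrite (alpha_refine_new addG) (alpha2_refine_new addG) //.
have ai_gt0 := a_gt0 i; have as_gt0 := a_gt0 s; have d_pos := d_gt0.
by field; rewrite !gt_eqF // ?mulr_gt0 ?addr_gt0.
Qed.

Lemma Var_est_refine_diff :
  (forall j, commuting_set R P (G j)) -> (forall j, commuting_set R P (G' j)) ->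
  Var_est c P psi G' M - Var_est c P psi G M
  = 2 * d / (a s * (d + a s))
    * (refine_rhs G l s - 2^-1 * c s ^+ 2 * sigma2 psi (P s)).
Proof.
move=> commG commG'; rewrite !Var_est_cov_term.
have diag : \sum_(i < N) c i ^+ 2 * sigma2 psi (P i) / alpha R G' M i
    - \sum_(i < N) c i ^+ 2 * sigma2 psi (P i) / a i
    = c s ^+ 2 * sigma2 psi (P s) * ((d + a s)^-1 - (a s)^-1).
  rewrite -sumrB (bigD1 s) //= big1 => [|i iNs]; last first.
    by rewrite (alpha_refine addG) // subrr.
  by rewrite (alpha_refine_new addG) addr0; ring.
have offdiag : \sum_(i < N) \sum_(k < N | (i < k)%N) cov_term G' i k
    - \sum_(i < N) \sum_(k < N | (i < k)%N) cov_term G i k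
    = d / (a s * (d + a s)) * refine_rhs G l s.
  rewrite -sumrB; under eq_bigr do rewrite -sumrB.
  rewrite (big_ltn_pairs_through (s := s)) => [|i k iNs kNs|i]; last 2 first.
  - by rewrite cov_term_refine // subrr.
  - by rewrite (cov_termC commG) (cov_termC commG').
  by rewrite (eq_bigr _ cov_term_refine_new) -mulr_sumr.
have -> : forall x y u v : R, x + 2 * u - (y + 2 * v) = (x - y) + 2 * (u - v).
  by move=> x y u v; ring.
rewrite diag offdiag; have as_gt0 := a_gt0 s; have d_pos := d_gt0.
by field; rewrite !gt_eqF // ?mulr_gt0 ?addr_gt0.
Qed.

End RefineStep.

End Estimator.

Unset Implicit Arguments. Set Strict Implicit.
Theorem lemma4 (R : rcfType) (n N m : nat)
    (c : 'I_N -> R) (P : 'I_N -> pstring n) (psi : basis n -> R[i])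
    (G G' : 'I_m -> {set 'I_N}) (M : 'I_m -> nat) (l : 'I_m) (s : 'I_N) :
  (forall i, c i != 0) ->
  injective P ->
  is_state psi ->
  is_repacked R P G ->
  is_repacked R P G' ->
  refines G G' ->
  (forall j, j != l -> G' j = G j) ->
  G' l :\: G l = [set s] ->
  (forall j, (0 < M j)%N) ->
  let a := alpha R G M in
  let a2 := alpha2 R G M in
  let rhs :=
    \sum_(i in G l) c i * c s * sigma psi (P i) (P s) * (a s - a2 i s) / a i
    - \sum_(i in ~: G l | i != s) c i * c s * sigma psi (P i) (P s) * a2 i s / a i
  in
  (Var_est c P psi G' M <= Var_est c P psi G M
     <-> rhs <= 2^-1 * c s ^+ 2 * sigma2 psi (P s)) /\
  (Var_est c P psi G' M < Var_est c P psi G M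
     <-> rhs < 2^-1 * c s ^+ 2 * sigma2 psi (P s)).
Proof.
move=> _ _ _ repG repG' GG' G'_off G'_new M_gt0 a a2 rhs.
have addG : single_refinement G G' l s by [].
have [_ [_ _ commG]] := repG; have [_ [_ _ commG']] := repG'.
have coverG := repacked_cover repG.
have -> : rhs = refine_rhs c P psi M G l s.
  by rewrite refine_rhsE // (refine_new_notin addG).
have diff := Var_est_refine_diff c psi addG coverG M_gt0 commG commG'.
apply: (subr_pmul_le_lt_iff _ diff).
have as_gt0 := alpha_gt0 R coverG M_gt0 s.
have d_gt0 : 0 < (M l)%:R :> R by rewrite ltr0n.
by rewrite divr_gt0 ?mulr_gt0 ?addr_gt0 ?ltr0n.
Qed.
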